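(* Let $(A,B)$ be a random vector, $(A_n,B_n)_{n\in\mathbb N}$ i.i.d. copies, $X=\sum_{k\ge1}\Pi_{k-1}B_k$ with $|X|<\infty$ a.s. Assume $\mathbb P\{A=0\}=0$, $\mathbb P\{B=0\}<1$, $\mathbb P\{B+Ac=c\}<1$ for all $c\in\mathbb R$, and $\mathbb P\{A\in(0,1]\}=1$. If $\mathbb E e^{rX}<\infty$ for some $r>0$, then $\mathbb E e^{rB}\mathbf 1_{\{A=1\}}<1$ (regardless of whether the support of the distribution of $X$ is bounded from the right).
   Context: $\Pi_0:=1$, $\Pi_n:=A_1\cdots A_n$. *)

From HB Require Import structures.
From mathcomp Require Import all_boot all_order all_algebra.
From mathcomp Require Import all_classical all_reals all_analysis.
Set Implicit Arguments. Unset Strict Implicit. Unset Printing Implicit Defensive.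
Import Order.TTheory GRing.Theory Num.Theory.
Import numFieldNormedType.Exports.
Local Open Scope classical_set_scope.
Local Open Scope ring_scope.

Definition mutually_independent {d} {T : measurableType d} {R : realType}
  (P : probability T R) (V : nat -> T -> R * R) : Prop :=
  forall (I : seq nat) (S : nat -> set (R * R)), uniq I ->
    (forall i, i \in I -> measurable (S i)) ->
    P (\bigcap_(i in [set` I]) (V i @^-1` S i)) =
    (\prod_(i <- I) P (V i @^-1` S i))%E.

Definition same_law {d} {T : measurableType d} {R : realType}
  (P : probability T R) (V W : T -> R * R) : Prop :=
  forall S : set (R * R), measurable S -> P (V @^-1` S) = P (W @^-1` S).

Definition Pi {T} {R : realType} (A : nat -> T -> R) (n : nat) (t : T) : R :=
  \prod_(1 <= i < n.+1) A i t.

(* The k-th term (k >= 1) Pi_{k-1} B_k, indexed from 0: term k = Pi_k B_{k+1}. *)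
Definition Xterm {T} {R : realType} (A B : nat -> T -> R) (t : T) (k : nat) : R :=
  Pi A k t * B k.+1 t.

Definition Xsum {T} {R : realType} (A B : nat -> T -> R) (t : T) : R :=
  limn (series (Xterm A B t)).

From HB Require Import structures.
From mathcomp Require Import all_boot all_order all_algebra.
From mathcomp Require Import all_classical all_reals all_analysis.
From mathcomp Require Import measurable_realfun.
Set Implicit Arguments. Unset Strict Implicit. Unset Printing Implicit Defensive.
Import Order.TTheory GRing.Theory Num.Theory.
Import numFieldNormedType.Exports.
Local Open Scope classical_set_scope.
Local Open Scope ring_scope.

(* Write X = B_1 + A_1 X', where X' = sum_{k>=2} A_2...A_{k-1} B_k is independent
   of (A_1, B_1) and has the law of X.  Splitting E e^{rX} according to whether
   A_1 = 1 gives the renewal equation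
     E e^{rX} = E[e^{rB} 1_{A=1}] E e^{rX} + E[e^{r(B_1 + A_1 X')} 1_{A_1 <> 1}],
   whose last term is positive as soon as P{A <> 1} > 0; since E e^{rX} is finite,
   the coefficient E[e^{rB} 1_{A=1}] must be < 1.  If instead A = 1 a.s., then
   X = sum_k B_k with i.i.d. B_k that are not a.s. 0, so the terms of the series
   a.s. do not tend to 0, contradicting the a.s. convergence of X. *)

Lemma cvgn_cauchy_invP (R : realType) (u : nat -> R) : cvgn u <->
  forall k : nat, exists N, forall n, (N <= n)%N -> `|u N - u n| < k.+1%:R^-1.
Proof.
split.
- move=> /cvg_ex[l ul] k.
  have e0 : 0 < k.+1%:R^-1 / 2 :> R by rewrite divr_gt0 // invr_gt0.
  move/cvgrPdist_lt : ul => /(_ _ e0) -[N _ Nu].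
  exists N => n Nn.
  rewrite (le_lt_trans (ler_distD l _ _)) //.
  rewrite [X in _ < X](splitr (k.+1%:R^-1)) ltrD //.
    by rewrite distrC; apply: Nu => /=.
  by apply: Nu.
- move=> H; apply/cauchy_cvgP; apply/cauchy_exP => e e0.
  have [k ke] : exists k : nat, k.+1%:R^-1 < e.
    by have [k] := ltr_add_invr e0; rewrite add0r; exists k.
  have [N HN] := H k.
  exists (u N); exists N => // n Nn /=.
  rewrite -ball_normE /ball_ /=.
  exact: lt_trans (HN n Nn) ke.
Qed.

(* [limn] takes the junk value 0 off the (measurable) set where the sequence converges. *)
Lemma measurable_limn d (T : measurableType d) (R : realType) (u : nat -> T -> R) :
  (forall n, measurable_fun setT (u n)) -> measurable_fun setT (fun t => limn (u ^~ t)).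
Proof.
move=> mu.
set C := [set t | cvgn (u ^~ t)].
have mC : measurable C.
  have -> : C = \bigcap_k \bigcup_N \bigcap_n
      [set t | (N <= n)%N -> `|u N t - u n t| < k.+1%:R^-1].
    apply/seteqP; split => t.
    - move=> /cvgn_cauchy_invP H k _; have [N HN] := H k.
      by exists N => // n _; exact: HN.
    - move=> H; apply/cvgn_cauchy_invP => k; have [N _ HN] := H k I.
      by exists N => n Nn; exact: HN n I Nn.
  apply: bigcapT_measurable => k; apply: bigcupT_measurable => N.
  apply: bigcapT_measurable => n.
  have [Nn|Nn] := leqP N n; last first.
    by rewrite (_ : [set t | _] = setT) //; apply/seteqP; split => // t _ /=.
  have mf : measurable_fun setT (fun t => `|u N t - u n t|).
    by apply: measurableT_comp => //; apply: measurable_funB.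
  rewrite (_ : [set t | _] = (fun t => `|u N t - u n t|) @^-1` `]-oo, k.+1%:R^-1[).
    by rewrite -[X in measurable X]setTI; apply: mf => //; exact: measurable_itv.
  apply/seteqP; split => t /=.
    by move=> /(_ isT); rewrite in_itv.
  by rewrite in_itv => + _.
rewrite -(setUv C); apply/measurable_funU => //; first exact: measurableC.
split.
  apply: (measurable_fun_cvg (h := u)) => //.
  by move=> m; apply: measurable_funS (mu m).
apply: (@eq_measurable_fun _ _ _ _ _ (fun=> (0:R))); last exact: measurable_cst.
move=> t; rewrite inE /= => Ct.
rewrite /lim /lim_in getPN //= => l ul; apply: Ct.
by apply/cvg_ex; exists l.
Qed.

Lemma integral_gt0 d (T : measurableType d) (R : realType)
  (m : {measure set T -> \bar R}) (D : set T) (f : T -> \bar R) :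
  measurable D -> measurable_fun D f -> (forall x, D x -> (0 < f x)%E) ->
  (0 < m D)%E -> (0 < \int[m]_(x in D) f x)%E.
Proof.
move=> mD mf fgt0 mD0.
rewrite lt_neqAle integral_ge0 ?andbT; last by move=> x Dx; exact/ltW/fgt0.
apply/negP => /eqP f0.
have : (\int[m]_(x in D) `|f x| = 0)%E.
  rewrite [RHS]f0; apply: eq_integral => x; rewrite inE => Dx.
  by rewrite gee0_abs //; exact/ltW/fgt0.
move/(ae_eq_integral_abs m mD mf) => [N [mN N0 DN]].
have DsubN : D `<=` N.
  move=> x Dx; apply: DN => /= /(_ Dx) fx0.
  by have := fgt0 x Dx; rewrite fx0 ltxx.
by move: mD0; rewrite (subset_measure0 mD mN DsubN N0) ltxx.
Qed.

Lemma renewal_coef_lt1 (R : realType) (x c s : \bar R) :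
  x \is a fin_num -> (0 <= x)%E -> (0 < s)%E -> x = (c * x + s)%E -> (c < 1)%E.
Proof.
move=> xfin x0 s0 xE; rewrite ltNge; apply/negP => c1.
have : (x + s <= x)%E by rewrite [X in (_ <= X)%E]xE leeD // lee_pemull.
by rewrite leNgt lteDl ?s0.
Qed.

Section sequence_space.
Context (R : realType).

Definition cyl (n : nat) (S : nat -> set (R * R)) : set (nat -> R * R) :=
  [set w | forall i, (i < n)%N -> S i (w i)].

Definition cylinders : set (set (nat -> R * R)) :=
  [set C | exists n S, (forall i, measurable (S i)) /\ C = cyl n S].

Definition seqspace := g_sigma_algebraType cylinders.

Lemma cylinders_setI : setI_closed cylinders.
Proof.
move=> _ _ [n1 [S1 [mS1 ->]]] [n2 [S2 [mS2 ->]]].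
exists (maxn n1 n2), (fun i => (if (i < n1)%N then S1 i else setT) `&`
                             (if (i < n2)%N then S2 i else setT)); split.
  by move=> i; apply: measurableI; case: ifP.
apply/seteqP; split => w /=.
  move=> [H1 H2] i _; split.
    by case: ifP => // /H1.
  by case: ifP => // /H2.
move=> H; split => i ilt.
  have : (i < maxn n1 n2)%N by rewrite leq_max ilt.
  by move=> /H [+ _]; rewrite ilt.
have : (i < maxn n1 n2)%N by rewrite leq_max ilt orbT.
by move=> /H [_]; rewrite ilt.
Qed.

Lemma cylinders_setT : cylinders setT.
Proof.
exists 0%N, (fun=> setT); split => //.
by apply/seteqP; split => // w _ i.
Qed.

Lemma seqspace_measurableE : (measurable : set (set seqspace)) = <<s cylinders >>.
Proof. by []. Qed.

Lemma cylinder_measurable C : cylinders C -> measurable (C : set seqspace).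
Proof. by move=> GC; apply: sub_sigma_algebra. Qed.

Lemma measurable_coord i : measurable_fun setT (fun w : seqspace => w i).
Proof.
move=> _ Y mY; rewrite setTI.
apply: cylinder_measurable; exists i.+1, (fun j => if j == i then Y else setT).
split; first by move=> j; case: ifP.
apply/seteqP; split => w /=.
  by move=> Yw j _; case: eqP => // ->.
by move=> /(_ i (ltnSn i)); rewrite eqxx.
Qed.

Definition perp_term (w : nat -> R * R) k := (\prod_(i < k) (w i).1) * (w k).2.
Definition perpetuity (w : nat -> R * R) : R := limn (series (perp_term w)).
Definition behead_seq (w : nat -> R * R) : nat -> R * R := fun i => w i.+1.

Lemma measurable_perpetuity : measurable_fun setT (perpetuity : seqspace -> R).
Proof.
apply: measurable_limn => n; rewrite /series /=.
apply: measurable_sum => k; apply: measurable_funM.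
  apply: measurable_prod => i _.
  exact: measurableT_comp measurable_fst (measurable_coord i).
exact: measurableT_comp measurable_snd (measurable_coord k).
Qed.

Lemma perp_termS w k : perp_term w k.+1 = (w 0%N).1 * perp_term (behead_seq w) k.
Proof. by rewrite /perp_term big_ord_recl mulrA. Qed.

Lemma perp_seriesS w n : series (perp_term w) n.+1 =
  (w 0%N).2 + (w 0%N).1 * series (perp_term (behead_seq w)) n.
Proof.
rewrite /series /= big_nat_recl //; congr (_ + _).
  by rewrite /perp_term big_ord0 mul1r.
by rewrite mulr_sumr; apply: eq_bigr => k _; rewrite perp_termS.
Qed.

(* When a_0 = 0 the tail series need not converge; then both sides reduce to b_0. *)
Lemma perpetuity_behead w : cvgn (series (perp_term w)) ->
  perpetuity w = (w 0%N).2 + (w 0%N).1 * perpetuity (behead_seq w).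
Proof.
move=> cw.
have cwS : [sequence series (perp_term w) n.+1]_n @ \oo --> perpetuity w.
  by rewrite cvg_shiftS.
have [a0|a0] := eqVneq (w 0%N).1 0.
  rewrite a0 mul0r addr0.
  move: cwS; under eq_fun do rewrite perp_seriesS a0 mul0r addr0.
  by move=> /cvg_lim => <- //; rewrite lim_cst.
have ct : series (perp_term (behead_seq w)) @ \oo -->
    (w 0%N).1^-1 * (perpetuity w - (w 0%N).2).
  rewrite (_ : series _ = fun n => (w 0%N).1^-1 *
      ([sequence series (perp_term w) n.+1]_n n - (w 0%N).2)).
    exact: (cvgM (cvg_cst _) (cvgB cwS (cvg_cst _))).
  apply/funext => n /=.
  by rewrite perp_seriesS addrAC subrr add0r mulrA mulVf // mul1r.
rewrite /perpetuity (cvg_lim _ ct) // mulrA divff // mul1r.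
by rewrite addrC subrK.
Qed.

End sequence_space.

Section iid_sequence.
Context d (T : measurableType d) (R : realType) (P : probability T R)
  (A B : T -> R) (An Bn : nat -> T -> R).
Hypotheses (mA : measurable_fun setT A) (mB : measurable_fun setT B)
  (mAn : forall n, measurable_fun setT (An n))
  (mBn : forall n, measurable_fun setT (Bn n))
  (indep : mutually_independent P (fun n t => (An n t, Bn n t)))
  (law : forall n, same_law P (fun t => (An n t, Bn n t)) (fun t => (A t, B t))).

Let V n t := (An n t, Bn n t).
Let V0 t := (A t, B t).

Let mV n : measurable_fun setT (V n).
Proof. exact: measurable_fun_pair. Qed.

Let mV0 : measurable_fun setT V0.
Proof. exact: measurable_fun_pair. Qed.

Let measurable_preimage_V n S : measurable S -> measurable (V n @^-1` S).
Proof. by move=> mS; rewrite -[X in measurable X]setTI; apply: mV. Qed.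

Let measurable_preimage_V0 S : measurable S -> measurable (V0 @^-1` S).
Proof. by move=> mS; rewrite -[X in measurable X]setTI; apply: mV0. Qed.

Definition lawAB (S : set (R * R)) := P (V0 @^-1` S).

Lemma lawAB_setT : lawAB setT = 1%E.
Proof. by rewrite /lawAB preimage_setT probability_setT. Qed.

Definition tail_seq k : T -> seqspace R := fun t i => V (k + i) t.

Lemma tail_seq_cyl k n S : tail_seq k @^-1` cyl n S =
  \bigcap_i (if (i < n)%N then V (k + i) @^-1` S i else setT).
Proof.
apply/seteqP; split => t /=.
  by move=> H i _; case: ifP => // /H.
by move=> H i ilt; have := H i I; rewrite ilt.
Qed.

Lemma measurable_tail_seq k : measurable_fun setT (tail_seq k).
Proof.
apply: (@measurability _ _ _ _ setT _ _ (seqspace_measurableE R)).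
move=> _ [_ [n [S [mS ->]]] <-]; rewrite setTI tail_seq_cyl.
apply: bigcapT_measurable => i; case: ifP => // _.
exact: measurable_preimage_V.
Qed.

Let measurable_preimage_tail k X : measurable X -> measurable (tail_seq k @^-1` X).
Proof. by move=> mX; rewrite -[X in measurable X]setTI; apply: measurable_tail_seq. Qed.

Lemma prod_law_iota k n (F : nat -> set (R * R)) : (forall i, measurable (F i)) ->
  (\prod_(i <- iota k n) P (V i @^-1` F (i - k)%N) = \prod_(i < n) lawAB (F i))%E.
Proof.
move=> mF.
rewrite -[k]addn0 iotaDl big_map.
have -> : iota 0 n = index_iota 0 n by rewrite /index_iota subn0.
rewrite big_mkord; apply: eq_bigr => i _.
by rewrite addn0 addKn; apply: law.
Qed.

Lemma indep_tail_cyl j k n S0 S : (j < k)%N -> measurable S0 ->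
  (forall i, measurable (S i)) ->
  P (V j @^-1` S0 `&` tail_seq k @^-1` cyl n S) =
  (lawAB S0 * \prod_(i < n) lawAB (S i))%E.
Proof.
move=> jk mS0 mS.
have neq_j i : (k <= i)%N -> (i == j) = false.
  by move=> ki; apply/negbTE; rewrite neq_ltn (leq_trans jk ki) orbT.
pose S' := fun i => if i == j then S0 else S (i - k)%N.
have uI : uniq (j :: iota k n).
  by rewrite /= iota_uniq andbT mem_iota negb_and -ltnNge jk.
have := indep (S := S') uI.
rewrite (_ : \bigcap_(i in [set` j :: iota k n]) _ =
             V j @^-1` S0 `&` tail_seq k @^-1` cyl n S).
  move=> ->; last by move=> i _; rewrite /S'; case: eqP.
  rewrite big_cons /S' eqxx (law j mS0); congr (_ * _)%E.
  rewrite -(prod_law_iota k n mS) big_seq [RHS]big_seq; apply: eq_bigr => i.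
  by rewrite mem_iota => /andP[ki _]; rewrite neq_j.
apply/seteqP; split => t /=.
- move=> H; split.
    by have := H j; rewrite /S' eqxx; apply; rewrite /= inE eqxx.
  move=> i ilt; have := H (k + i)%N; rewrite /S' neq_j ?leq_addr // addKn.
  by apply; rewrite /= inE mem_iota leq_addr ltn_add2l ilt orbT.
- move=> [H0 H] i; rewrite /= inE => /orP[/eqP ->|]; first by rewrite /S' eqxx.
  rewrite mem_iota => /andP[ki ikn]; rewrite /S' neq_j //.
  have := H (i - k)%N; rewrite /tail_seq /= subnKC //; apply.
  by rewrite ltn_subLR.
Qed.

Let tail_seq_mfun k : tail_seq k \in mfun.
Proof. by rewrite inE; exact: measurable_tail_seq. Qed.

Local Notation law_tail k := (distribution P (mfun_Sub (tail_seq_mfun k))).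

Let law_tail_setT_gt0 k : (0 < law_tail k [set: seqspace R])%E.
Proof. by rewrite probability_setT lte01. Qed.

Lemma law_tail_cyl k n S : (0 < k)%N -> (forall i, measurable (S i)) ->
  law_tail k (cyl n S) = (\prod_(i < n) lawAB (S i))%E.
Proof.
move=> k0 mS; have -> : law_tail k (cyl n S) = P (tail_seq k @^-1` cyl n S) by [].
rewrite -[X in P X]setTI -(preimage_setT (V 0)).
by rewrite indep_tail_cyl // lawAB_setT mul1e.
Qed.

Lemma law_tail_shift j k X : (0 < j)%N -> (0 < k)%N -> measurable X ->
  law_tail j X = law_tail k X.
Proof.
move=> j0 k0 mX.
apply: (@measure_unique _ R _ _ _ (seqspace_measurableE R) (@cylinders_setI R)
  (fun=> @cylinders_setT R) _ (law_tail j) (law_tail k)) => //.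
- by rewrite bigcup_const.
- move=> _ [n [S [mS ->]]].
  exact: etrans (law_tail_cyl n j0 mS) (esym (law_tail_cyl n k0 mS)).
- by move=> _; apply: (le_lt_trans (probability_le1 _ measurableT)); exact: ltry.
Qed.

Section head_tail_independence.
Variables (S : set (R * R)) (j k : nat).
Hypotheses (mS : measurable S) (jk : (j < k)%N).

(* Both sides of [indep_head_tail] are finite measures in X that agree on cylinders. *)
Let head_tail (X : set (seqspace R)) := P (V j @^-1` S `&` tail_seq k @^-1` X).

Let head_tail0 : head_tail set0 = 0%E.
Proof. by rewrite /head_tail preimage_set0 setI0 measure0. Qed.

Let head_tail_ge0 X : (0 <= head_tail X)%E.
Proof. exact: measure_ge0. Qed.

Let head_tail_sigma_additive : semi_sigma_additive head_tail.
Proof.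
move=> F mF tF mUF; rewrite /head_tail preimage_bigcup setI_bigcupr.
apply: measure_semi_sigma_additive.
- by move=> n; apply: measurableI; [exact: measurable_preimage_V|
                                     exact: measurable_preimage_tail].
- apply/trivIsetP => i i' _ _ ii'; rewrite setIACA setIid -preimage_setI.
  by move/trivIsetP : tF => /(_ _ _ _ _ ii') ->//; rewrite preimage_set0 setI0.
- rewrite -setI_bigcupr -preimage_bigcup.
  by apply: measurableI; [exact: measurable_preimage_V|
                          exact: measurable_preimage_tail].
Qed.

HB.instance Definition _ := isMeasure.Build _ _ _ head_tail
  head_tail0 head_tail_ge0 head_tail_sigma_additive.

Let lawS : {nonneg R} := NngNum (fine_ge0 (measure_ge0 P (V0 @^-1` S))).

Let lawAB_fin : lawAB S \is a fin_num.
Proof.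
rewrite ge0_fin_numE; last exact: measure_ge0.
by apply: (le_lt_trans (probability_le1 _ _)); [exact: measurable_preimage_V0|
                                                 exact: ltry].
Qed.

Let product (X : set (seqspace R)) := (lawAB S * law_tail k X)%E.

Let productE X : product X = mscale lawS (law_tail k) X.
Proof. by rewrite /product /mscale /lawS /= fineK. Qed.

Let product0 : product set0 = 0%E.
Proof. by rewrite productE measure0. Qed.

Let product_ge0 X : (0 <= product X)%E.
Proof. by rewrite productE measure_ge0. Qed.

Let product_sigma_additive : semi_sigma_additive product.
Proof.
move=> F mF tF mUF; rewrite productE.
under eq_fun do under eq_bigr do rewrite productE.
exact: measure_semi_sigma_additive.
Qed.

HB.instance Definition _ := isMeasure.Build _ _ _ product
  product0 product_ge0 product_sigma_additive.

Lemma indep_head_tail X : measurable X ->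
  P (V j @^-1` S `&` tail_seq k @^-1` X) = (lawAB S * law_tail k X)%E.
Proof.
move=> mX; have k0 : (0 < k)%N := leq_ltn_trans (leq0n j) jk.
apply: (@measure_unique _ R _ _ _ (seqspace_measurableE R) (@cylinders_setI R)
  (fun=> @cylinders_setT R) _ head_tail product) => //.
- by rewrite bigcup_const.
- move=> _ [n [Sc [mSc ->]]].
  by rewrite /= /head_tail /product indep_tail_cyl // law_tail_cyl.
- move=> _; apply: (le_lt_trans (probability_le1 _ _)); last exact: ltry.
  by apply: measurableI; [exact: measurable_preimage_V|
                          exact: measurable_preimage_tail].
Qed.

End head_tail_independence.

Lemma measurable_head_tail : measurable_fun setT (fun t => (V 1 t, tail_seq 2 t)).
Proof. exact: measurable_fun_pair (mV 1) (measurable_tail_seq 2). Qed.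

Let head_tail_mfun : (fun t => (V 1 t, tail_seq 2 t)) \in mfun.
Proof. by rewrite inE; exact: measurable_head_tail. Qed.

Let V0_mfun : V0 \in mfun.
Proof. by rewrite inE; exact: mV0. Qed.

Local Notation law_head_tail := (distribution P (mfun_Sub head_tail_mfun)).
Local Notation law_V0 := (distribution P (mfun_Sub V0_mfun)).

Lemma law_head_tail_product Y : measurable Y ->
  ((law_V0 \x law_tail 2) Y = law_head_tail Y)%E.
Proof.
apply: product_measure_unique => S X mS mX.
exact: indep_head_tail.
Qed.

Lemma Xterm_perp_term t : Xterm An Bn t = perp_term (tail_seq 1 t).
Proof.
by apply/funext => k; rewrite /Xterm /Pi /perp_term big_add1 /= big_mkord.
Qed.

Lemma Xsum_perpetuity t : Xsum An Bn t = perpetuity (tail_seq 1 t).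
Proof. by rewrite /Xsum Xterm_perp_term. Qed.

Lemma perpetuity_tail_seq1 t : cvgn (series (Xterm An Bn t)) ->
  perpetuity (tail_seq 1 t) = Bn 1 t + An 1 t * perpetuity (tail_seq 2 t).
Proof. by rewrite Xterm_perp_term => /perpetuity_behead. Qed.

Lemma measurable_Xsum : measurable_fun setT (Xsum An Bn).
Proof.
rewrite (_ : Xsum An Bn = @perpetuity R \o tail_seq 1).
  exact: measurableT_comp (@measurable_perpetuity R) (measurable_tail_seq 1).
by apply/funext => t; rewrite /= Xsum_perpetuity.
Qed.

Definition fst_eq1 : set (R * R) := [set v | v.1 = 1].

Lemma measurable_fst_eq1 : measurable fst_eq1.
Proof.
have : measurable (fst @^-1` [set (1:R)] : set (R * R)).
  by rewrite -[X in measurable X]setTI; apply: measurable_fst.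
by [].
Qed.

Definition snd_abs_le (e : R) : set (R * R) := [set v | `|v.2| <= e].

Lemma measurable_snd_abs_le e : measurable (snd_abs_le e).
Proof.
have mf : measurable_fun setT (fun v : R * R => `|v.2|).
  by apply: measurableT_comp => //; exact: measurable_snd.
rewrite (_ : snd_abs_le e = (fun v : R * R => `|v.2|) @^-1` `]-oo, e]).
  by rewrite -[X in measurable X]setTI; apply: mf => //; exact: measurable_itv.
by apply/seteqP; split => v /=; rewrite in_itv.
Qed.

Definition stays_in S m := \bigcap_i (V (m.+1 + i) @^-1` S).

Lemma stays_in_null S m : measurable S -> (lawAB S < 1)%E -> P (stays_in S m) = 0%E.
Proof.
move=> mS q1.
have mstays : measurable (stays_in S m).
  by apply: bigcapT_measurable => i; exact: measurable_preimage_V.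
have [q qE] : exists q, lawAB S = q%:E.
  exists (fine (lawAB S)); rewrite fineK // ge0_fin_numE; last exact: measure_ge0.
  exact: lt_trans q1 (ltry 1).
have q0 : 0 <= q by rewrite -lee_fin -qE measure_ge0.
have qlt1 : q < 1 by rewrite -lte_fin -qE.
have le_pow n : (P (stays_in S m) <= (q ^+ n)%:E)%E.
  have -> : (q ^+ n)%:E = P (V 0 @^-1` setT `&` tail_seq m.+1 @^-1` cyl n (fun=> S)).
    by rewrite indep_tail_cyl // lawAB_setT mul1e qE prodEFin prodr_const card_ord.
  apply: le_measure; rewrite ?inE //.
  - apply: measurableI; first by rewrite preimage_setT.
    apply: measurable_preimage_tail; apply: cylinder_measurable.
    by exists n, (fun=> S).
  - by move=> t St; split => // i _; exact: St.
apply/eqP; rewrite eq_le measure_ge0 andbT.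
have Pfin : P (stays_in S m) \is a fin_num.
  rewrite ge0_fin_numE; last exact: measure_ge0.
  by apply: le_lt_trans (le_pow 0%N) _; rewrite ltry.
rewrite -(fineK Pfin) lee_fin leNgt; apply/negP => y0.
have := cvg_expr (z := q); rewrite ger0_norm // => /(_ qlt1).
move/cvgrPdist_lt => /(_ _ y0) [N _ HN].
have := HN N (leqnn N); rewrite sub0r normrN ger0_norm ?exprn_ge0 //.
by rewrite ltNge -lee_fin (fineK Pfin) le_pow.
Qed.

Lemma exists_snd_abs_le_lt1 : (P (B @^-1` [set 0%R]) < 1)%E ->
  exists2 e : R, 0 < e & (lawAB (snd_abs_le e) < 1)%E.
Proof.
move=> PB0; apply: contrapT => /forall2NP noe.
have law1 k : lawAB (snd_abs_le k.+1%:R^-1) = 1%E.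
  have mS := measurable_preimage_V0 (measurable_snd_abs_le k.+1%:R^-1).
  apply/eqP; rewrite eq_le [(_ <= 1)%E](probability_le1 _ mS) /=.
  rewrite leNgt; apply/negP => lt1.
  by case: (noe k.+1%:R^-1) => //; rewrite invr_gt0.
have : {ae P, forall t, forall k : nat, `|B t| <= k.+1%:R^-1}.
  apply: ae_foralln => k.
  have mC := measurableC (measurable_snd_abs_le k.+1%:R^-1).
  exists (V0 @^-1` ~` snd_abs_le k.+1%:R^-1); split => //.
  - exact: measurable_preimage_V0.
  - transitivity (lawAB (~` snd_abs_le k.+1%:R^-1)); first by [].
    have mS := measurable_preimage_V0 (measurable_snd_abs_le k.+1%:R^-1).
    by rewrite /lawAB preimage_setC probability_setC // [P _]law1 subee.
move=> [N [mN N0 sub]].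
have mB0 : measurable (B @^-1` [set 0%R]).
  by rewrite -[X in measurable X]setTI; apply: mB.
have PBn0 : P (~` (B @^-1` [set 0%R])) = 0%E.
  apply: (subset_measure0 _ mN) => //; first exact: measurableC.
  move=> t /= Bt0; apply: sub => /= Ble; apply: Bt0.
  apply/normr0_eq0/eqP; rewrite eq_le normr_ge0 andbT.
  rewrite leNgt; apply/negP => Bpos.
  have [k] := ltr_add_invr Bpos; rewrite add0r => kB.
  by have := Ble k; rewrite leNgt kB.
move: PB0; rewrite -[B @^-1` _]setCK probability_setC; last exact: measurableC.
by rewrite PBn0 sube0 ltxx.
Qed.

Lemma lawAB_notfst_eq1_gt0 : {ae P, forall t, cvgn (series (Xterm An Bn t))} ->
  (P (B @^-1` [set 0%R]) < 1)%E -> (0 < lawAB (~` fst_eq1))%E.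
Proof.
move=> cvae PB0; rewrite lt_def measure_ge0 andbT; apply/eqP => A1.
have [e e0 q1] := exists_snd_abs_le_lt1 PB0.
have aeA1 : {ae P, forall t, forall k, An k t = 1}.
  apply: ae_foralln => k.
  exists (V k @^-1` ~` fst_eq1); split => //.
  - exact: measurable_preimage_V (measurableC measurable_fst_eq1).
  - by rewrite -A1; apply: law; exact: measurableC measurable_fst_eq1.
have aeleave : {ae P, forall t, forall m, ~ stays_in (snd_abs_le e) m t}.
  apply: ae_foralln => m; exists (stays_in (snd_abs_le e) m); split.
  - by apply: bigcapT_measurable => i;
       exact: measurable_preimage_V (measurable_snd_abs_le e).
  - exact: stays_in_null (measurable_snd_abs_le e) q1.
  - by move=> t /= /contrapT.
have [N [mN N0 sub]] : {ae P, forall t : T, False}.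
  move: cvae aeA1 aeleave; apply: filterS3 => t cv A1t leave.
  have := cvg_series_cvg_0 cv; move/cvgrPdist_lt => /(_ e e0) [M _ HM].
  apply: (leave M) => i _ /=.
  have := HM (M + i)%N (leq_addr i M).
  rewrite /Xterm /Pi big1 ?mul1r; last by move=> l _; rewrite A1t.
  by rewrite sub0r normrN => /ltW.
have : P setT = 0%E.
  by apply: (subset_measure0 _ mN) => // t _; apply: sub => /=; case.
by rewrite probability_setT => -[] /eqP; rewrite oner_eq0.
Qed.

Variable r : R.

Definition exp_affine (z : (R * R) * seqspace R) : \bar R :=
  (expR (r * (z.1.2 + z.1.1 * perpetuity z.2)))%:E.

Lemma measurable_exp_affine : measurable_fun setT exp_affine.
Proof.
apply/measurable_EFinP; apply: measurableT_comp => //.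
apply: measurable_funM => //; apply: measurable_funD.
  exact: measurableT_comp measurable_snd measurable_fst.
apply: measurable_funM.
  exact: measurableT_comp measurable_fst measurable_fst.
exact: measurableT_comp (@measurable_perpetuity R) measurable_snd.
Qed.

Lemma exp_affine_gt0 z : (0 < exp_affine z)%E.
Proof. by rewrite lte_fin expR_gt0. Qed.

Lemma exp_affine_ge0 z : (0 <= exp_affine z)%E.
Proof. exact/ltW/exp_affine_gt0. Qed.

Definition mgfX := (\int[P]_t (expR (r * Xsum An Bn t))%:E)%E.

Definition mgf_tail := (\int[law_tail 2]_w (expR (r * perpetuity w))%:E)%E.

(* E[e^{rX} | (A_1, B_1) = v] *)
Definition cond_mgf (v : R * R) := (\int[law_tail 2]_w exp_affine (v, w))%E.

Lemma measurable_cond_mgf : measurable_fun setT cond_mgf.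
Proof. exact: (measurable_fun_fubini_tonelli_F _ measurable_exp_affine exp_affine_ge0). Qed.

Lemma cond_mgf_gt0 v : (0 < cond_mgf v)%E.
Proof.
apply: integral_gt0 => //.
- exact: (measurable_fun_pair2 v measurable_exp_affine).
- by move=> w _; exact: exp_affine_gt0.
- exact: law_tail_setT_gt0.
Qed.

Lemma measurable_exp_perpetuity :
  measurable_fun setT (fun w : seqspace R => (expR (r * perpetuity w))%:E).
Proof.
apply/measurable_EFinP; apply: measurableT_comp => //.
by apply: measurable_funM => //; exact: measurable_perpetuity.
Qed.

Lemma mgfX_cond : {ae P, forall t, cvgn (series (Xterm An Bn t))} ->
  mgfX = (\int[law_V0]_v cond_mgf v)%E.
Proof.
move=> cvae.
have -> : mgfX = (\int[P]_t exp_affine (V 1 t, tail_seq 2 t))%E.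
  apply: ae_eq_integral => //.
  - apply/measurable_EFinP; apply: measurableT_comp => //.
    by apply: measurable_funM => //; exact: measurable_Xsum.
  - exact: measurableT_comp measurable_exp_affine measurable_head_tail.
  - apply: filterS cvae => t cv _.
    by rewrite /exp_affine /= Xsum_perpetuity perpetuity_tail_seq1.
transitivity (\int[law_head_tail]_z exp_affine z)%E.
  by rewrite (@ge0_integral_distribution _ _ _ _ _ P (mfun_Sub head_tail_mfun)
    exp_affine measurable_exp_affine exp_affine_ge0).
transitivity (\int[law_V0 \x law_tail 2]_z exp_affine z)%E.
  by apply: eq_measure_integral => Y mY _; exact/esym/law_head_tail_product.
exact: (fubini_tonelli1 _ measurable_exp_affine exp_affine_ge0).
Qed.

Lemma mgf_tailE : mgf_tail = mgfX.
Proof.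
rewrite /mgf_tail (eq_measure_integral (law_tail 1)); last first.
  by move=> Y mY _; exact: law_tail_shift.
rewrite (@ge0_integral_distribution _ _ _ _ _ P (mfun_Sub (tail_seq_mfun 1)) _
  measurable_exp_perpetuity); last by move=> w; rewrite lee_fin expR_ge0.
by apply: eq_integral => t _; rewrite /= Xsum_perpetuity.
Qed.

Lemma integral_fst_eq1_cond_mgf : (\int[law_V0]_(v in fst_eq1) cond_mgf v =
  (\int[P]_(t in [set t | (A t = 1)%R]) (expR (r * B t))%:E) * mgfX)%E.
Proof.
have mexp2 : measurable_fun fst_eq1 (fun v : R * R => (expR (r * v.2))%:E).
  apply: (measurable_funS measurableT) => //.
  apply/measurable_EFinP; apply: measurableT_comp => //.
  by apply: measurableT_comp => //; exact: measurable_snd.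
rewrite -mgf_tailE.
transitivity (\int[law_V0]_(v in fst_eq1) ((expR (r * v.2))%:E * mgf_tail))%E.
  apply: eq_integral => v; rewrite inE /fst_eq1 /= => v1.
  rewrite /cond_mgf /mgf_tail -ge0_integralZl //; last exact: measurable_exp_perpetuity.
  by apply: eq_integral => w _; rewrite /exp_affine /= v1 mul1r mulrDr expRD EFinM.
rewrite ge0_integralZr //.
- congr (_ * _)%E.
  exact: (@ge0_integral_pushforward _ _ _ _ _ V0 mV0 P fst_eq1 _ measurable_fst_eq1 mexp2).
- exact: measurable_fst_eq1.
- by apply: integral_ge0 => w _; rewrite lee_fin expR_ge0.
Qed.

Lemma mgfX_renewal : {ae P, forall t, cvgn (series (Xterm An Bn t))} ->
  mgfX = ((\int[P]_(t in [set t | (A t = 1)%R]) (expR (r * B t))%:E) * mgfX +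
          \int[law_V0]_(v in ~` fst_eq1) cond_mgf v)%E.
Proof.
move=> cvae; rewrite -integral_fst_eq1_cond_mgf [LHS](mgfX_cond cvae).
rewrite -[in LHS](setUv fst_eq1) ge0_integral_setU //.
- exact: measurable_fst_eq1.
- exact: measurableC measurable_fst_eq1.
- by rewrite setUv; exact: measurable_cond_mgf.
- by move=> v _; exact/ltW/cond_mgf_gt0.
- exact/disj_setPCl.
Qed.

Lemma integral_notfst_eq1_cond_mgf_gt0 :
  {ae P, forall t, cvgn (series (Xterm An Bn t))} ->
  (P (B @^-1` [set 0%R]) < 1)%E ->
  (0 < \int[law_V0]_(v in ~` fst_eq1) cond_mgf v)%E.
Proof.
move=> cvae PB0; apply: integral_gt0.
- exact: measurableC measurable_fst_eq1.
- exact: measurable_funS measurable_cond_mgf.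
- by move=> v _; exact: cond_mgf_gt0.
- exact: lawAB_notfst_eq1_gt0.
Qed.

End iid_sequence.

Unset Implicit Arguments.

Theorem mainTheorem5 (d : measure_display) (T : measurableType d) (R : realType)
  (P : probability T R) (A B : T -> R) (An Bn : nat -> T -> R) (r : R) :
  measurable_fun setT A -> measurable_fun setT B ->
  (forall n, measurable_fun setT (An n)) -> (forall n, measurable_fun setT (Bn n)) ->
  mutually_independent P (fun n t => (An n t, Bn n t)) ->
  (forall n, same_law P (fun t => (An n t, Bn n t)) (fun t => (A t, B t))) ->
  {ae P, forall t, cvgn (series (Xterm An Bn t))} ->
  P (A @^-1` [set 0%R]) = 0%E ->
  (P (B @^-1` [set 0%R]) < 1)%E ->
  (forall c : R, (P [set t | (B t + A t * c = c)%R] < 1)%E) ->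
  P (A @^-1` `]0%R, 1%R]%classic) = 1%E ->
  0 < r ->
  (\int[P]_t (expR (r * Xsum An Bn t))%:E < +oo)%E ->
  (\int[P]_(t in [set t | (A t = 1)%R]) (expR (r * B t))%:E < 1)%E.
Proof.
move=> mA mB mAn mBn indep law cvae _ PB0 _ _ _ mgf_fin.
have mgf_ge0 : (0 <= mgfX P An Bn r)%E.
  by apply: integral_ge0 => t _; rewrite lee_fin expR_ge0.
apply: (renewal_coef_lt1 _ mgf_ge0
  (integral_notfst_eq1_cond_mgf_gt0 mA mB mAn mBn indep law r cvae PB0)).
- by rewrite ge0_fin_numE.
- exact: (mgfX_renewal mA mB mAn mBn indep law r cvae).
Qed.
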